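(* Let $p \ge 1$ and let $G_p$ be the graph obtained from the cycle $C_6$ by substituting a complete graph $K_p$ for each vertex. Then $G_p$ is $(4K_1, C_4, \text{claw})$-free, $G_p$ is $2p$-colourable, and $G_p$ has a frozen $3p$-colouring.
   Context: All graphs are finite and simple. Substituting a graph $H$ for a vertex $v$ of $G$ means taking $G-v$, adding a disjoint copy of $H$, and joining every vertex of $H$ to every neighbour of $v$ in $G$ (done for each vertex of $C_6$ in turn). A $k$-colouring is a proper colouring with colours $\{1,\dots,k\}$. A $k$-colouring is frozen if, for every vertex $v$, all $k$ colours appear in the closed neighbourhood of $v$ (equivalently, it is an isolated vertex of the reconfiguration graph of $k$-colourings, where two colourings are adjacent if they differ on exactly one vertex). $\mathcal{H}$-free means no induced subgraph isomorphic to a member of $\mathcal{H}$; $4K_1$ is the edgeless graph on 4 vertices, claw is $K_{1,3}$. *)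

From mathcomp Require Import all_boot.
Set Implicit Arguments. Unset Strict Implicit. Unset Printing Implicit Defensive.

Definition C6_adj (i j : 'I_6) : bool :=
  (val j == (val i + 1) %% 6) || (val i == (val j + 1) %% 6).

(* G_p: substitute K_p for every vertex of C_6.  Vertex (i,a) is the a-th
   vertex of the copy of K_p replacing vertex i of C_6. *)
Definition Gp_vert (p : nat) : finType := ('I_6 * 'I_p)%type.
Definition Gp_adj (p : nat) : rel (Gp_vert p) :=
  fun x y => ((x.1 == y.1) && (x.2 != y.2)) || C6_adj x.1 y.1.

Definition induced_sub (HV : finType) (eH : rel HV) (V : finType) (e : rel V) : Prop :=
  exists f : HV -> V, injective f /\ forall x y, e (f x) (f y) = eH x y.

Definition fourK1_adj : rel 'I_4 := fun _ _ => false.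
Definition C4_adj : rel 'I_4 :=
  fun i j => (val j == (val i + 1) %% 4) || (val i == (val j + 1) %% 4).
Definition claw_adj : rel 'I_4 :=
  fun i j => (i != j) && ((val i == 0) || (val j == 0)).

Definition four_K1_C4_claw_free (V : finType) (e : rel V) : Prop :=
  ~ induced_sub fourK1_adj e /\ ~ induced_sub C4_adj e /\ ~ induced_sub claw_adj e.

(* A k-colouring: colours {1..k} represented by 'I_k. *)
Definition proper_colouring (V : finType) (e : rel V) (k : nat) (c : V -> 'I_k) : Prop :=
  forall x y, e x y -> c x != c y.

Definition colourable (V : finType) (e : rel V) (k : nat) : Prop :=
  exists c : V -> 'I_k, proper_colouring e c.

Definition frozen (V : finType) (e : rel V) (k : nat) (c : V -> 'I_k) : Prop :=
  forall (v : V) (a : 'I_k), exists u : V, ((u == v) || e v u) && (c u == a).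

Definition has_frozen_colouring (V : finType) (e : rel V) (k : nat) : Prop :=
  exists c : V -> 'I_k, proper_colouring e c /\ frozen e c.

From mathcomp Require Import all_boot zmodp matrix.
Set Implicit Arguments. Unset Strict Implicit. Unset Printing Implicit Defensive.

(* G_p is the blow-up of C_6 in which every vertex becomes a clique of size p.
   Two distinct vertices of a clique blow-up are adjacent iff their shadows in
   the base graph are equal or adjacent, so an induced 4K_1, C_4 or claw in
   G_p would map onto a "closed" copy of it in C_6, which a finite search rules
   out.  Colouring a vertex by the pair (colour of its shadow, position in its
   clique) turns a proper m-colouring of C_6 into a proper mp-colouring of
   G_p, and keeps it frozen; C_6 has the proper 2-colouring i mod 2 and the
   frozen 3-colouring i mod 3. *)

Lemma eq_mxvec_index (m n : nat) (i i' : 'I_m) (j j' : 'I_n) :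
  (mxvec_index i j == mxvec_index i' j') = (i == i') && (j == j').
Proof. by rewrite (inj_eq (@cast_ord_inj _ _ _)) (inj_eq enum_rank_inj). Qed.

Section CliqueBlowup.
Variables (B : finType) (e : rel B) (p : nat).

Definition closed_adj : rel B := fun i j => (i == j) || e i j.

Definition clique_blowup : rel (B * 'I_p) :=
  fun x y => ((x.1 == y.1) && (x.2 != y.2)) || e x.1 y.1.

Lemma clique_blowup_neq (x y : B * 'I_p) :
  x != y -> clique_blowup x y = closed_adj x.1 y.1.
Proof.
case: x y => [i a] [j b]; rewrite /clique_blowup /closed_adj xpair_eqE /=.
by case: eqP => [->|_] //= ->.
Qed.

Definition closed_shadow (HV : finType) (eH : rel HV) : Prop :=
  exists g : HV -> B, forall x y, x != y -> closed_adj (g x) (g y) = eH x y.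

Lemma induced_sub_clique_blowup (HV : finType) (eH : rel HV) :
  induced_sub eH clique_blowup -> closed_shadow eH.
Proof.
case=> f [f_inj f_adj]; exists (fun x => (f x).1) => x y neq_xy.
by rewrite -clique_blowup_neq ?f_adj // (inj_eq f_inj).
Qed.

Definition blowup_colouring (m : nat) (c : B -> 'I_m) (x : B * 'I_p) : 'I_(m * p) :=
  mxvec_index (c x.1) x.2.

Lemma blowup_colouring_proper (m : nat) (c : B -> 'I_m) :
  proper_colouring e c -> proper_colouring clique_blowup (blowup_colouring c).
Proof.
move=> c_proper [i a] [j b] /orP[/andP[/eqP /= -> neq_ab] | /c_proper neq_c];
  by rewrite /blowup_colouring eq_mxvec_index negb_and ?neq_ab ?neq_c ?orbT.
Qed.

Lemma blowup_colouring_frozen (m : nat) (c : B -> 'I_m) :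
  frozen e c -> frozen clique_blowup (blowup_colouring c).
Proof.
move=> c_frozen [i a] k; case/mxvec_indexP: k => col b.
have [j /andP[near_ij /eqP c_j]] := c_frozen i col.
exists (j, b); rewrite /blowup_colouring /= c_j eq_mxvec_index !eqxx andbT.
case: eqP near_ij => [-> _ | _ /= e_ij]; last by rewrite /clique_blowup /= e_ij !orbT.
by rewrite xpair_eqE /clique_blowup /= !eqxx andbT eq_sym; case: eqP.
Qed.

End CliqueBlowup.

Arguments clique_blowup {B} e p.

Section OrdinalSearch.

(* Unlike [ord_enum n], which is blocked by the opaque [idP] inside [insub],
   this enumeration of ['I_n] evaluates, so that finite checks run by
   [vm_compute]. *)
Definition ord_list (n : nat) : seq 'I_n := pmap (@insub_eq _ _ 'I_n) (iota 0 n).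

Lemma mem_ord_list (n : nat) (i : 'I_n) : i \in ord_list n.
Proof. by rewrite /ord_list (eq_pmap (@insub_eqE _ _ _)) mem_ord_enum. Qed.

Lemma all_ord_listP (n : nat) (P : pred 'I_n) :
  reflect (forall i, P i) (all P (ord_list n)).
Proof.
by apply: (iffP allP) => [P_all i | P_all i _]; [apply/P_all/mem_ord_list | apply: P_all].
Qed.

Lemma has_ord_listP (n : nat) (P : pred 'I_n) :
  reflect (exists i, P i) (has P (ord_list n)).
Proof. by apply: (iffP hasP) => [[i _ Pi] | [i Pi]]; exists i; rewrite ?mem_ord_list. Qed.

Variables (n k : nat).

Lemma proper_colouringP (e : rel 'I_n) (c : 'I_n -> 'I_k) :
  reflect (proper_colouring e c)
    (all (fun i => all (fun j => e i j ==> (c i != c j)) (ord_list n)) (ord_list n)).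
Proof.
apply: (iffP (all_ord_listP _)) => [c_proper i j | c_proper i].
  exact/implyP/(all_ord_listP _ (c_proper i)).
by apply/all_ord_listP => j; apply/implyP/c_proper.
Qed.

Lemma frozenP (e : rel 'I_n) (c : 'I_n -> 'I_k) :
  reflect (frozen e c)
    (all (fun v => all (fun a =>
       has (fun u => ((u == v) || e v u) && (c u == a)) (ord_list n))
     (ord_list k)) (ord_list n)).
Proof.
apply: (iffP (all_ord_listP _)) => [c_frozen v a | c_frozen v].
  exact/has_ord_listP/(all_ord_listP _ (c_frozen v)).
by apply/all_ord_listP => a; apply/has_ord_listP/c_frozen.
Qed.

Fixpoint ord_seqs (l : nat) : seq (seq 'I_n) :=
  if l is l'.+1 then [seq i :: s | i <- ord_list n, s <- ord_seqs l'] else [:: [::]].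

Lemma mem_ord_seqs (s : seq 'I_n) : s \in ord_seqs (size s).
Proof.
by elim: s => [|i s IHs] //=; apply/allpairsP; exists (i, s); rewrite mem_ord_list.
Qed.

End OrdinalSearch.

Definition has_closed_shadow (k n : nat) (eH : rel 'I_k) (e : rel 'I_n.+1) : bool :=
  has (fun s => all (fun x : 'I_k => all (fun y : 'I_k =>
         (x != y) ==> (closed_adj e (nth ord0 s x) (nth ord0 s y) == eH x y))
       (ord_list k)) (ord_list k))
    (ord_seqs n.+1 k).

Lemma closed_shadowP (k n : nat) (eH : rel 'I_k) (e : rel 'I_n.+1) :
  reflect (closed_shadow e eH) (has_closed_shadow eH e).
Proof.
apply: (iffP hasP) => [[s _ s_shadow] | [g g_shadow]].
  exists (fun x : 'I_k => nth ord0 s x) => x y neq_xy; apply/eqP.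
  by move/all_ord_listP/(_ x)/all_ord_listP/(_ y): s_shadow; rewrite neq_xy.
exists (codom g).
  by have := mem_ord_seqs (codom g); rewrite size_codom card_ord.
have nth_codom_g (x : 'I_k) : nth ord0 (codom g) x = g x.
  by rewrite (nth_map x) ?nth_ord_enum // -cardE card_ord.
apply/all_ord_listP => x; apply/all_ord_listP => y; apply/implyP => neq_xy.
by rewrite !nth_codom_g g_shadow.
Qed.

Lemma C6_blowup_four_K1_C4_claw_free (p : nat) :
  four_K1_C4_claw_free (clique_blowup C6_adj p).
Proof.
have no_shadow eH : ~~ has_closed_shadow eH C6_adj ->
    ~ induced_sub eH (clique_blowup C6_adj p).
  by move=> /negP no_sh /induced_sub_clique_blowup /closed_shadowP.
by split; [|split]; apply: no_shadow; vm_compute.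
Qed.

Theorem lemma1 (p : nat) (hp : 1 <= p) :
  four_K1_C4_claw_free (@Gp_adj p) /\
  colourable (@Gp_adj p) (2 * p) /\
  has_frozen_colouring (@Gp_adj p) (3 * p).
Proof.
split; first exact: C6_blowup_four_K1_C4_claw_free.
split.
  exists (blowup_colouring (fun i : 'I_6 => inZp i : 'I_2)).
  by apply: blowup_colouring_proper; apply/proper_colouringP; vm_compute.
exists (blowup_colouring (fun i : 'I_6 => inZp i : 'I_3)); split.
  by apply: blowup_colouring_proper; apply/proper_colouringP; vm_compute.
by apply: blowup_colouring_frozen; apply/frozenP; vm_compute.
Qed.
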